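(* Let $\mathcal{F}=\mathcal{F}(X)$ be the free group on an alphabet $X$, equipped with a bi-order $\prec$, and let $W$ be a cyclically reduced word in $\mathcal{F}$. Let $A$ be the maximal ascent of $W$, and let $M$ and $m$ be the peak and the low of $W$, respectively. If $A$ is a subword of $W$, then $W\succ 1_\mathcal{F}$ and $M=mA$. Consequently, $W$ has exactly one subword equivalent to $A$, and no subword of $W^{-1}$ is equivalent to $A$. Moreover, if $W=AD$ with $D\neq 1_\mathcal{F}$, then $D$ is a descent.
   Context: Words are over $X^*=X\cup X^{-1}$; a word $y_1\cdots y_n$ is reduced if $y_i\neq y_{i+1}^{-1}$ for all $i$, and cyclically reduced if moreover $y_1\neq y_n^{-1}$. Words are identified with the elements of $\mathcal{F}$ they represent; $1_\mathcal{F}$ is the empty word. A bi-order on $\mathcal{F}$ is a total order invariant under both left and right multiplication. A subword of $W$ is a word $V$ with $W=SVU$ and $|W|=|S|+|V|+|U|$; it is a prefix if $S$ is empty and a suffix if $U$ is empty. Two subwords (in different positions) are equivalent if they have the same spelling. If $W=UV$ with $U$ a prefix, then $VU$ is a cyclic permutation of $W$. $R_W$ denotes the set of cyclic permutations of $W$ and of $W^{-1}$. A word $U$ is an ascent if every (nonempty) prefix and every (nonempty) suffix of $U$ (including $U$ itself) is $\succ 1_\mathcal{F}$, and a descent if every such prefix and suffix is $\prec 1_\mathcal{F}$. The maximal ascent of $W$ is the greatest (with respect to $\prec$) ascent among all subwords of elements of $R_W$. The peak (resp. low) of $W$ is the largest (resp. smallest) prefix of $W$ with respect to $\prec$, where prefixes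 include the empty word and $W$ itself. *)

From mathcomp Require Import all_boot.
Set Implicit Arguments. Unset Strict Implicit. Unset Printing Implicit Defensive.

Section FreeGroup.
Variable X : eqType.

(* a letter is (x, true) for x and (x, false) for x^{-1} *)
Definition letter := (X * bool)%type.
Definition linv (y : letter) : letter := (y.1, ~~ y.2).

Definition word := seq letter.

Definition winv (w : word) : word := rev (map linv w).

Definition reduced (w : word) : bool :=
  if w is y :: t then path (fun a b => b != linv a) y t else true.
Definition cyc_reduced (w : word) : bool :=
  reduced w && (if w is y :: t then last y t != linv y else true).

(* free reduction (stack algorithm); reduce w is the reduced word
   representing the same element of the free group as w *)
Definition cons_red (x : letter) (s : word) : word :=
  if s is y :: t then (if y == linv x then t else x :: s) else [:: x].
Definition reduce (w : word) : word := foldr cons_red [::] w.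

(* a bi-order on the free group, given as a strict relation on reduced words *)
Definition is_biorder (lt : word -> word -> bool) : Prop :=
  [/\ (forall a, reduced a -> ~~ lt a a),
      (forall a b c, reduced a -> reduced b -> reduced c ->
          lt a b -> lt b c -> lt a c),
      (forall a b, reduced a -> reduced b -> a <> b -> lt a b \/ lt b a),
      (forall a b c, reduced a -> reduced b -> reduced c ->
          lt a b -> lt (reduce (c ++ a)) (reduce (c ++ b))) &
      (forall a b c, reduced a -> reduced b -> reduced c ->
          lt a b -> lt (reduce (a ++ c)) (reduce (b ++ c)))].

Variable lt : word -> word -> bool.

Definition prec (u v : word) : bool := lt (reduce u) (reduce v).
Definition preceq (u v : word) : bool := (reduce u == reduce v) || prec u v.

Definition ascent (U : word) : Prop :=
  prec [::] U /\
  (forall P, prefix P U -> P != [::] -> prec [::] P) /\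
  (forall S, suffix S U -> S != [::] -> prec [::] S).
Definition descent (U : word) : Prop :=
  prec U [::] /\
  (forall P, prefix P U -> P != [::] -> prec P [::]) /\
  (forall S, suffix S U -> S != [::] -> prec S [::]).

Definition in_RW (W R : word) : Prop :=
  exists2 i, i <= size W & (R = rot i W \/ R = rot i (winv W)).

Definition cyc_subword (W V : word) : Prop :=
  exists2 R, in_RW W R & infix V R.

Definition max_ascent (W A : word) : Prop :=
  [/\ ascent A, cyc_subword W A &
      forall V, ascent V -> cyc_subword W V -> preceq V A].

(* M is the peak of W / m is the low of W (prefixes include [::] and W) *)
Definition peak (W M : word) : Prop :=
  prefix M W /\ forall P, prefix P W -> preceq P M.
Definition low (W m : word) : Prop :=
  prefix m W /\ forall P, prefix P W -> preceq m P.

Definition occurs_at (W V : word) (i : nat) : Prop :=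
  i + size V <= size W /\ take (size V) (drop i W) = V.

End FreeGroup.

From mathcomp Require Import all_boot zify.
Set Implicit Arguments. Unset Strict Implicit. Unset Printing Implicit Defensive.

(* Let n = |W| and write p_k for the prefix of length k of W W (0 <= k <= 2n), so that
   p_(n+k) = W p_k.  As W W is reduced, the p_k are pairwise distinct, and for i <= j <= i + n
   the subword between positions i and j is a cyclic subword of W of value p_i^-1 p_j.  It is
   an ascent when p_i and p_j are the least and the greatest p_k on [i, j], and then
   p_i^-1 p_j <= A by maximality; symmetrically for descents, whose inverses are ascents.
   After a rotation of W we may assume that A = p_a is a prefix.  Comparing A with such
   extremal subwords shows in turn that p_a is the greatest p_k for k <= n, that W > 1, and
   that W = p_n is the least p_k for a <= k <= n + a.  These facts locate the peak and the low,
   make the rest of W after A a descent, and, applied to W^-1 (which has the same maximal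
   ascent), show that A cannot occur in W^-1. *)

Section FreeReduction.
Variable X : eqType.
Implicit Types (x y : letter X) (u v w : word X).

Definition nocancel x y : bool := y != linv x.

Lemma linvK : involutive (@linv X).
Proof. by case=> x []. Qed.

Lemma reducedE w : reduced w = sorted nocancel w.
Proof. by case: w. Qed.

Lemma reduced_cat_self w : reduced (w ++ w) = cycle nocancel w.
Proof.
case: w => [|y t] //; rewrite reducedE /= rcons_path cat_path /=.
by case: (path _ y t); rewrite ?andbT.
Qed.

Lemma cyc_reduced_cycle w : cyc_reduced w -> cycle nocancel w.
Proof.
case: w => [|y t] // /andP[Hred Hlast].
rewrite /= rcons_path; apply/andP; split; first exact: Hred.
by rewrite /nocancel; apply: contra Hlast => /eqP Ey; rewrite {2}Ey linvK.
Qed.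

Lemma reduced_cons_red x w : reduced w -> reduced (cons_red x w).
Proof.
case: w => [|y t] //=; case: eqP => [_|/eqP ne] H; last by rewrite /= ne.
by rewrite reducedE (path_sorted H).
Qed.

Lemma reduced_foldr_cons_red w u : reduced w -> reduced (foldr (@cons_red X) w u).
Proof. by move=> Hw; elim: u => //= x u IH; apply: reduced_cons_red. Qed.

Lemma reduce_reduced w : reduced (reduce w).
Proof. exact: reduced_foldr_cons_red. Qed.

Lemma reduce_id w : reduced w -> reduce w = w.
Proof.
elim: w => //= x t IH H; rewrite IH ?reducedE ?(path_sorted H) //.
by case: t H {IH} => //= y t /andP[/negbTE-> _].
Qed.

Lemma cons_red_linv x w : reduced w -> cons_red x (cons_red (linv x) w) = w.
Proof.
case: w => [|y t] H /=; first by rewrite eqxx.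
case: (y =P linv (linv x)) => [Ey|_]; last by rewrite /= eqxx.
rewrite linvK in Ey; subst y.
by case: t H => [|z t] //= /andP[/negbTE-> _].
Qed.

Lemma reduce_cat u v : reduce (u ++ v) = foldr (@cons_red X) (reduce v) u.
Proof. by rewrite /reduce foldr_cat. Qed.

Lemma foldr_cons_red_reduce w u : reduced w ->
  foldr (@cons_red X) w u = foldr (@cons_red X) w (reduce u).
Proof.
move=> Hw; elim: u => //= x u ->.
case: (reduce u) => [|y r] //=; case: (y =P linv x) => [->|//].
by rewrite cons_red_linv // reduced_foldr_cons_red.
Qed.

Lemma reduce_cat_reducel u v : reduce (reduce u ++ v) = reduce (u ++ v).
Proof. by rewrite !reduce_cat -foldr_cons_red_reduce // reduce_reduced. Qed.

Lemma reduce_cat_reducer u v : reduce (u ++ reduce v) = reduce (u ++ v).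
Proof. by rewrite !reduce_cat (reduce_id (reduce_reduced v)). Qed.

Lemma winv_cat u v : winv (u ++ v) = winv v ++ winv u.
Proof. by rewrite /winv map_cat rev_cat. Qed.

Lemma winvK : involutive (@winv X).
Proof.
move=> w; rewrite /winv map_rev revK -map_comp.
by rewrite (eq_map (g := id)) ?map_id // => y /=; rewrite linvK.
Qed.

Lemma size_winv w : size (winv w) = size w.
Proof. by rewrite size_rev size_map. Qed.

Lemma winv_rot n w : winv (rot n w) = rot (size w - n) (winv w).
Proof. by rewrite /winv map_rot rev_rot /rotr size_rev size_map. Qed.

Lemma reduce_winv_catl w : reduce (winv w ++ w) = [::].
Proof.
elim: w => //= x w IH.
rewrite /winv /= rev_cons -cats1 -catA reduce_cat /= -/(winv w).
by rewrite -{2}(linvK x) cons_red_linv ?reduce_reduced // -reduce_cat.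
Qed.

Lemma reduce_winv_catr w : reduce (w ++ winv w) = [::].
Proof. by rewrite -{1}(winvK w) reduce_winv_catl. Qed.

Lemma prefix_winv u w : prefix u (winv w) -> suffix (winv u) w.
Proof. by case/prefixP=> v Ew; apply/suffixP; exists (winv v); rewrite -winv_cat -Ew winvK. Qed.

Lemma suffix_winv u w : suffix u (winv w) -> prefix (winv u) w.
Proof. by case/suffixP=> v Ew; apply/prefixP; exists (winv v); rewrite -winv_cat -Ew winvK. Qed.

Lemma winv_eq0 w : (winv w == [::]) = (w == [::]).
Proof. by rewrite -!size_eq0 size_winv. Qed.

Lemma reduced_winv w : reduced w -> reduced (winv w).
Proof.
rewrite !reducedE /winv rev_sorted sorted_map.
by apply: sub_sorted => a b; apply: contra => /eqP->; rewrite /= linvK.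
Qed.

End FreeReduction.

Section BiOrder.
Variables (X : eqType) (lt : word X -> word X -> bool).
Hypothesis Hlt : is_biorder lt.
Implicit Types u v w c : word X.
Local Notation prec := (prec lt).
Local Notation preceq := (preceq lt).

Lemma prec_irr u : ~~ prec u u.
Proof. by case: Hlt => irr _ _ _ _; apply/irr/reduce_reduced. Qed.

Lemma prec_trans v u w : prec u v -> prec v w -> prec u w.
Proof. by case: Hlt => _ tr _ _ _; apply/tr/reduce_reduced/reduce_reduced/reduce_reduced. Qed.

Lemma prec_total u v : reduce u <> reduce v -> prec u v \/ prec v u.
Proof. by case: Hlt => _ _ tot _ _; apply/tot/reduce_reduced/reduce_reduced. Qed.

Lemma prec_catl c u v : prec u v -> prec (c ++ u) (c ++ v).
Proof.
case: Hlt => _ _ _ mull _ /(mull _ _ (reduce c)).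
by rewrite /prec !reduce_cat_reducel !reduce_cat_reducer; apply; apply: reduce_reduced.
Qed.

Lemma prec_catr c u v : prec u v -> prec (u ++ c) (v ++ c).
Proof.
case: Hlt => _ _ _ _ mulr /(mulr _ _ (reduce c)).
by rewrite /prec !reduce_cat_reducel !reduce_cat_reducer; apply; apply: reduce_reduced.
Qed.

Lemma prec_cat2l c u v : prec (c ++ u) (c ++ v) = prec u v.
Proof.
apply/idP/idP; last exact: prec_catl.
move/(prec_catl (winv c)); rewrite /prec !catA.
by rewrite -!(reduce_cat_reducel (_ ++ c)) reduce_winv_catl.
Qed.

Lemma prec_cat2r c u v : prec (u ++ c) (v ++ c) = prec u v.
Proof.
apply/idP/idP; last exact: prec_catr.
move/(prec_catr (winv c)); rewrite /prec -!catA.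
by rewrite -!(reduce_cat_reducer _ (c ++ _)) reduce_winv_catr !cats0.
Qed.

Lemma prec_winv u v : prec (winv u) (winv v) = prec v u.
Proof.
rewrite -(prec_cat2l v) -(prec_cat2r u) /prec -catA -(reduce_cat_reducer v).
by rewrite reduce_winv_catl cats0 -(reduce_cat_reducel (v ++ _)) reduce_winv_catr.
Qed.

Lemma preceq_refl u : preceq u u.
Proof. by rewrite /preceq eqxx. Qed.

Lemma prec_preceq u v : prec u v -> preceq u v.
Proof. by rewrite /preceq => ->; rewrite orbT. Qed.

Lemma preceq_prec_trans v u w : preceq u v -> prec v w -> prec u w.
Proof. by case/orP=> [/eqP Euv|Huv /(prec_trans Huv)]; rewrite ?/prec ?Euv. Qed.

Lemma prec_preceq_trans v u w : prec u v -> preceq v w -> prec u w.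
Proof. by move=> Huv /orP[/eqP Evw|/(prec_trans Huv)]; rewrite ?/prec -?Evw. Qed.

Lemma preceq_trans v u w : preceq u v -> preceq v w -> preceq u w.
Proof.
move=> /orP[/eqP Euv|Huv] Hvw; first by rewrite /preceq /prec Euv.
exact/prec_preceq/(prec_preceq_trans Huv).
Qed.

Lemma preceqNprec u v : preceq u v = ~~ prec v u.
Proof.
apply/idP/idP=> [Huv|Hvu]; first by apply/negP => /(preceq_prec_trans Huv); apply/negP/prec_irr.
rewrite /preceq; case: eqP => //= /prec_total[//|Hvu'].
by rewrite Hvu' in Hvu.
Qed.

Lemma precNpreceq u v : prec u v = ~~ preceq v u.
Proof. by rewrite preceqNprec negbK. Qed.

Lemma preceq_total : total preceq.
Proof. by move=> u v; rewrite preceqNprec -implybE; apply/implyP/prec_preceq. Qed.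

Lemma preceq_neq_prec u v : preceq u v -> reduce u <> reduce v -> prec u v.
Proof. by case/orP=> [/eqP|]. Qed.

Lemma prec_reducel u u' v : reduce u = reduce u' -> prec u v = prec u' v.
Proof. by rewrite /prec => ->. Qed.

Lemma preceq_reducel u u' v : reduce u = reduce u' -> preceq u v = preceq u' v.
Proof. by rewrite /preceq /prec => ->. Qed.

Lemma preceq_cat2l c u v : preceq (c ++ u) (c ++ v) = preceq u v.
Proof. by rewrite !preceqNprec prec_cat2l. Qed.

Lemma preceq_cat2r c u v : preceq (u ++ c) (v ++ c) = preceq u v.
Proof. by rewrite !preceqNprec prec_cat2r. Qed.

Lemma preceq_winv u v : preceq (winv u) (winv v) = preceq v u.
Proof. by rewrite !preceqNprec prec_winv. Qed.

Lemma prec_winv_cat_ltr u u' v v' :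
  preceq u' u -> prec v v' -> prec (winv u ++ v) (winv u' ++ v').
Proof.
move=> Hu Hv; apply: prec_preceq_trans (prec_catl _ Hv) _.
by rewrite preceq_cat2r preceq_winv.
Qed.

Lemma prec_winv_cat_ltl u u' v v' :
  prec u' u -> preceq v v' -> prec (winv u ++ v) (winv u' ++ v').
Proof.
move=> Hu Hv; apply: (@preceq_prec_trans (winv u ++ v')); first by rewrite preceq_cat2l.
by rewrite prec_cat2r prec_winv.
Qed.

Lemma prec0_winv u : prec [::] (winv u) = prec u [::].
Proof. exact: (prec_winv [::] u). Qed.

Lemma ascent_winv u : descent lt u -> ascent lt (winv u).
Proof.
case=> Hu [Hpre Hsuf]; split; first by rewrite prec0_winv.
split=> v Hv Hv0; rewrite -(winvK v) prec0_winv.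
  by apply: Hsuf; rewrite ?prefix_winv ?winv_eq0.
by apply: Hpre; rewrite ?suffix_winv ?winv_eq0.
Qed.

Lemma biorder_rev : is_biorder (fun u v => lt v u).
Proof.
case: Hlt => irr tr tot mull mulr; split=> //.
- by move=> u v w Hu Hv Hw Hvu Hwv; apply: tr Hwv Hvu.
- by move=> u v Hu Hv /nesym/tot; apply.
- by move=> u v w Hu Hv Hw; apply: mull.
- by move=> u v w Hu Hv Hw; apply: mulr.
Qed.

End BiOrder.

Lemma exists_argmax (T : Type) (r : rel T) : transitive r -> total r ->
  forall (f : nat -> T) lo hi, lo <= hi ->
  exists2 j, lo <= j <= hi & forall k, lo <= k <= hi -> r (f k) (f j).
Proof.
move=> r_trans r_total f lo; have r_refl x : r x x by have := r_total x x; rewrite orbb.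
elim=> [|hi IH] Hlo.
  by exists lo => [|k Hk]; [lia | have -> : k = lo by lia].
have [Hhi|/IH[j Hj Hmax]] := ltnP hi lo.
  by exists lo => [|k Hk]; [lia | have -> : k = lo by lia].
have [Hjhi|Hhij] := boolP (r (f j) (f hi.+1)).
  exists hi.+1 => [|k Hk]; first lia.
  have [->|Hk'] := eqVneq k hi.+1; first exact: r_refl.
  by apply: r_trans Hjhi; apply: Hmax; lia.
exists j => [|k Hk]; first lia.
have [->|Hk'] := eqVneq k hi.+1; last by apply: Hmax; lia.
by have := r_total (f j) (f hi.+1); rewrite (negbTE Hhij).
Qed.

Lemma exists_argmin (T : Type) (r : rel T) : transitive r -> total r ->
  forall (f : nat -> T) lo hi, lo <= hi ->
  exists2 j, lo <= j <= hi & forall k, lo <= k <= hi -> r (f j) (f k).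
Proof.
move=> r_trans r_total; apply: (@exists_argmax _ (fun x y => r y x)).
  by move=> x y z Hyx Hzy; apply: r_trans Hzy Hyx.
by move=> x y; rewrite orbC.
Qed.

Section CyclicWords.
Variable X : eqType.
Implicit Types (U V W R : word X).

Lemma in_RW_rot W s : in_RW W (rot s W).
Proof. by rewrite rot_minn; exists (minn s (size W)); [exact: geq_minr | left]. Qed.

Lemma in_RW_rot_winv W s : in_RW W (rot s (winv W)).
Proof.
by rewrite rot_minn size_winv; exists (minn s (size W)); [exact: geq_minr | right].
Qed.

Lemma in_RW_winv W : in_RW W (winv W).
Proof. by rewrite -(rot0 (winv W)); apply: in_RW_rot_winv. Qed.

Lemma in_RW_trans W V R : in_RW W V -> in_RW V R -> in_RW W R.
Proof.
case=> i _ [->|->] [j _ [->|->]]; rewrite ?winv_rot ?winvK rot_rot_add;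
  by [apply: in_RW_rot | apply: in_RW_rot_winv].
Qed.

Lemma cyc_subword_trans W V U : in_RW W V -> cyc_subword V U -> cyc_subword W U.
Proof. by move=> HWV [R HVR HUR]; exists R => //; apply: in_RW_trans HVR. Qed.

Lemma cyc_subword_winv W U : cyc_subword W U -> cyc_subword W (winv U).
Proof.
case=> R HWR /infixP[p [q ER]]; exists (winv R); first exact: in_RW_trans (in_RW_winv R).
by apply/infixP; exists (winv q), (winv p); rewrite ER !winv_cat catA.
Qed.

Lemma cyc_subword_infix W U : infix U W -> cyc_subword W U.
Proof. by exists W => //; exists 0 => //; left; rewrite rot0. Qed.

Lemma max_ascent_in_RW lt W V A :
  in_RW W V -> cyc_subword V A -> max_ascent lt W A -> max_ascent lt V A.
Proof.
move=> HWV HVA [HA _ Hmax]; split=> // U HU HVU.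
exact/Hmax/(cyc_subword_trans HWV).
Qed.

End CyclicWords.

Section DoubledWord.
Variables (X : eqType) (W : word X).
Hypothesis HWW : reduced (W ++ W).
Local Notation n := (size W).
Local Notation pre k := (take k (W ++ W)).
Local Notation seg i j := (drop i (pre j)).

Lemma size_pre k : k <= n + n -> size (pre k) = k.
Proof. by rewrite -size_cat => /size_takel. Qed.

Lemma size_seg i j : j <= n + n -> size (seg i j) = j - i.
Proof. by move=> Hj; rewrite size_drop size_pre. Qed.

Lemma reduced_pre k : reduced (pre k).
Proof. by move: HWW; rewrite !reducedE; apply: take_sorted. Qed.

Lemma pre_inj i j : i <= n + n -> j <= n + n -> reduce (pre i) = reduce (pre j) -> i = j.
Proof.
by move=> Hi Hj; rewrite !reduce_id ?reduced_pre // => /(congr1 size); rewrite !size_pre.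
Qed.

Lemma pre_size : pre n = W.
Proof. exact: take_size_cat. Qed.

Lemma cat_pre_seg i j : i <= j -> pre i ++ seg i j = pre j.
Proof. by move=> Hij; rewrite -{1}(take_takel _ Hij) cat_take_drop. Qed.

Lemma pre_addn k : k <= n -> pre (n + k) = W ++ pre k.
Proof. by move=> Hk; rewrite takeD take_size_cat // drop_size_cat // takel_cat. Qed.

Lemma reduce_seg i j : i <= j -> reduce (seg i j) = reduce (winv (pre i) ++ pre j).
Proof. by move=> Hij; rewrite -{2}(cat_pre_seg Hij) catA -reduce_cat_reducel reduce_winv_catl. Qed.

Lemma reduce_winv_seg i j : i <= j -> reduce (winv (seg i j)) = reduce (winv (pre j) ++ pre i).
Proof.
move=> Hij; rewrite -{2}(cat_pre_seg Hij) winv_cat -catA.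
by rewrite -(reduce_cat_reducer (winv _)) reduce_winv_catl cats0.
Qed.

Lemma cyc_subword_seg i j : i <= j <= n + n -> j - i <= n -> cyc_subword W (seg i j).
Proof.
move=> /andP[Hij Hj] Hlen; have [Hi|Hi] := leqP i n.
  exists (rot i W); first exact: in_RW_rot.
  rewrite -(subnK Hij) -take_drop -{1}[W](cat_take_drop i) -catA drop_size_cat ?size_takel //.
  rewrite -{2}[W](cat_take_drop i) catA takel_cat ?size_cat ?size_drop ?size_takel //; last lia.
  exact: infix_take.
exists W; first by exists 0 => //; left; rewrite rot0.
have -> : j = n + (j - n) by lia.
rewrite pre_addn ?takel_cat ?drop_cat ?ltnNge ?(ltnW Hi) /=; try lia.
exact: infix_trans (infix_drop _ _) (infix_take _ _).
Qed.

Lemma prefix_seg u i j : prefix u (seg i j) -> i <= j <= n + n ->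
  exists2 k, i <= k <= j & u = seg i k.
Proof.
rewrite prefixE => /eqP Eu /andP[Hij Hj].
have Hu : size u <= j - i by rewrite -(size_seg i Hj) -Eu size_take_min geq_minr.
exists (size u + i); first lia.
by rewrite -{1}Eu take_drop take_takel //; lia.
Qed.

Lemma suffix_seg u i j : suffix u (seg i j) -> i <= j <= n + n ->
  exists2 k, i <= k <= j & u = seg k j.
Proof.
rewrite suffixE => /eqP Eu /andP[Hij Hj].
have Hu : size u <= j - i by rewrite -(size_seg i Hj) -Eu size_drop leq_subr.
exists (size (seg i j) - size u + i); rewrite size_seg //; first lia.
by rewrite -{1}Eu drop_drop size_seg.
Qed.

Section Order.
Variable lt : word X -> word X -> bool.
Hypothesis Hlt : is_biorder lt.
Local Notation prec := (prec lt).
Local Notation preceq := (preceq lt).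

Lemma preceq_pre_prec i j : i != j -> i <= n + n -> j <= n + n ->
  preceq (pre i) (pre j) -> prec (pre i) (pre j).
Proof. by move=> /eqP Hij Hi Hj /preceq_neq_prec; apply => /(pre_inj Hi Hj). Qed.

Lemma prec_seg i j : i <= j -> prec [::] (seg i j) = prec (pre i) (pre j).
Proof. by move=> Hij; rewrite -(prec_cat2l Hlt (pre i)) cats0 cat_pre_seg. Qed.

Lemma ascent_seg i j : i < j <= n + n ->
  (forall k, i < k <= j -> prec (pre i) (pre k)) ->
  (forall k, i <= k < j -> prec (pre k) (pre j)) -> ascent lt (seg i j).
Proof.
move=> /andP[Hij Hj] Hmin Hmax.
have Hpre u : prefix u (seg i j) -> u != [::] -> prec [::] u.
  case/prefix_seg=> [|k Hk ->]; first lia.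
  rewrite -size_eq0 size_seg ?prec_seg; try lia.
  by move=> Hk0; apply: Hmin; lia.
split; first by apply: Hpre; rewrite ?prefix_refl // -size_eq0 size_seg; lia.
split=> // u /suffix_seg[|k Hk ->]; first lia.
rewrite -size_eq0 size_seg ?prec_seg; try lia.
by move=> Hk0; apply: Hmax; lia.
Qed.

End Order.

(* A descent is an ascent for the reversed order. *)
Lemma descent_seg lt : is_biorder lt -> forall i j, i < j <= n + n ->
  (forall k, i < k <= j -> prec lt (pre k) (pre i)) ->
  (forall k, i <= k < j -> prec lt (pre j) (pre k)) -> descent lt (seg i j).
Proof. by move/biorder_rev; apply: ascent_seg. Qed.

End DoubledWord.

Section PrefixAscent.
Variables (X : eqType) (lt : word X -> word X -> bool).
Hypothesis Hlt : is_biorder lt.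
Variables W A : word X.
Hypotheses (HWW : reduced (W ++ W)) (HA : max_ascent lt W A) (HAW : prefix A W).
Local Notation n := (size W).
Local Notation a := (size A).
Local Notation pre k := (take k (W ++ W)).
Local Notation seg i j := (drop i (pre j)).
Local Notation prec := (prec lt).
Local Notation preceq := (preceq lt).
Local Notation argmin := (exists_argmin (preceq_trans Hlt) (preceq_total Hlt) (fun k => pre k)).
Local Notation argmax := (exists_argmax (preceq_trans Hlt) (preceq_total Hlt) (fun k => pre k)).

Lemma size_A : a <= n.
Proof. exact: size_prefix. Qed.

Lemma A_pre : A = pre a.
Proof. by move: HAW; rewrite prefixE takel_cat ?size_A // => /eqP. Qed.

Lemma A_pos : prec [::] A.
Proof. by case: HA => -[]. Qed.

Lemma size_A_gt0 : 0 < a.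
Proof. by rewrite lt0n size_eq0; apply: contraTneq A_pos => ->; apply: prec_irr. Qed.

Lemma ascent_pre_pos k : 0 < k <= a -> prec [::] (pre k).
Proof.
case/andP=> Hk0 Hka; case: HA => -[_ [HApre _]] _ _.
apply: HApre; first by rewrite A_pre -(take_takel _ Hka) prefix_take.
by rewrite -size_eq0 size_pre -?lt0n //; have := size_A; lia.
Qed.

Lemma ascent_pre_le k : k <= a -> preceq (pre k) A.
Proof.
rewrite leq_eqVlt => /orP[/eqP->|Hka]; first by rewrite -A_pre preceq_refl.
case: HA => -[_ [_ HAsuf]] _ _; apply/prec_preceq; rewrite A_pre -(prec_seg W Hlt (ltnW Hka)).
apply: HAsuf; first by apply/suffixP; exists (pre k); rewrite cat_pre_seg 1?ltnW // -A_pre.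
by rewrite -size_eq0 size_seg -?lt0n ?subn_gt0 //; have := size_A; lia.
Qed.

Lemma rise_le_A i j : i <= j <= n + n -> j - i <= n ->
  (forall k, i <= k <= j -> preceq (pre i) (pre k)) ->
  (forall k, i <= k <= j -> preceq (pre k) (pre j)) ->
  preceq (winv (pre i) ++ pre j) A.
Proof.
move=> /andP[Hij Hj] Hlen Hmin Hmax; have [<-|Hij'] := eqVneq i j.
  by rewrite (@preceq_reducel _ lt _ [::] A (reduce_winv_catl _)); apply/prec_preceq/A_pos.
rewrite -(preceq_reducel lt A (reduce_seg _ Hij)); case: HA => _ _; apply.
  apply: ascent_seg => //; first by rewrite ltn_neqAle Hij' Hij.
    by move=> k Hk; apply: (preceq_pre_prec HWW); [lia | lia | lia | apply: Hmin; lia].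
  by move=> k Hk; apply: (preceq_pre_prec HWW); [lia | lia | lia | apply: Hmax; lia].
by apply: cyc_subword_seg; rewrite ?Hij.
Qed.

Lemma fall_le_A i j : i <= j <= n + n -> j - i <= n ->
  (forall k, i <= k <= j -> preceq (pre j) (pre k)) ->
  (forall k, i <= k <= j -> preceq (pre k) (pre i)) ->
  preceq (winv (pre j) ++ pre i) A.
Proof.
move=> /andP[Hij Hj] Hlen Hmin Hmax; have [<-|Hij'] := eqVneq i j.
  by rewrite (@preceq_reducel _ lt _ [::] A (reduce_winv_catl _)); apply/prec_preceq/A_pos.
rewrite -(preceq_reducel lt A (reduce_winv_seg _ Hij)); case: HA => _ _; apply.
  apply/ascent_winv/descent_seg => //; first by rewrite ltn_neqAle Hij' Hij.
    by move=> k Hk; apply: (preceq_pre_prec HWW); [lia | lia | lia | apply: Hmax; lia].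
  by move=> k Hk; apply: (preceq_pre_prec HWW); [lia | lia | lia | apply: Hmin; lia].
by apply/cyc_subword_winv/cyc_subword_seg; rewrite ?Hij.
Qed.

Lemma pre_le_A : forall k, k <= n -> preceq (pre k) A.
Proof.
have [j /andP[_ Hjn] Hmax] := argmax (leq0n n).
suff HjA : preceq (pre j) A by move=> k Hk; apply: (preceq_trans Hlt (Hmax k _) HjA).
rewrite preceqNprec //; apply/negP => HAj.
have Haj : a < j.
  by rewrite ltnNge; apply: contraL HAj => /ascent_pre_le; rewrite preceqNprec.
have [i /andP[_ Hij] Hmin] := argmin (leq0n j).
have : preceq (winv (pre i) ++ pre j) A.
  by apply: rise_le_A => [||l Hl|l Hl]; [lia | lia | apply: Hmin | apply: Hmax]; lia.
rewrite preceqNprec // => /negP; apply; apply: (@prec_winv_cat_ltr _ _ Hlt [::]) => //.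
by rewrite -(take0 (W ++ W)); apply: Hmin.
Qed.

Lemma W_pos : prec [::] W.
Proof.
have Ha := size_A_gt0; have Han := size_A.
rewrite precNpreceq //; apply/negP => /preceq_neq_prec HW1.
have {}HW1 : prec W [::].
  apply: HW1; rewrite -(pre_size W) reduce_id ?reduced_pre // pre_size => EW.
  by move: Han; rewrite EW /=; lia.
have Hle k : k <= n + a -> preceq (pre k) A.
  move=> Hk; have [Hkn|Hkn] := leqP k n; first exact: pre_le_A.
  have -> : k = n + (k - n) by lia.
  rewrite pre_addn; last lia.
  apply/prec_preceq/(@prec_preceq_trans _ _ Hlt (pre (k - n))).
    by rewrite -{2}[pre _]cat0s prec_cat2r.
  by apply: pre_le_A; lia.
have [i /andP[Hai Hin] Hmin] := argmin (leq_addl n a).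
have : preceq (winv (pre i) ++ pre a) A.
  by apply: fall_le_A => [||l Hl|l Hl]; [lia | lia | apply: Hmin | rewrite -A_pre; apply: Hle]; lia.
rewrite preceqNprec // => /negP; apply.
apply: (@prec_winv_cat_ltl _ _ Hlt [::]); last by rewrite -A_pre preceq_refl.
apply: (preceq_prec_trans Hlt _ HW1); rewrite -[X in preceq _ X](pre_size W); apply: Hmin; lia.
Qed.

Lemma W_le_pre : forall k, a <= k <= n + a -> preceq W (pre k).
Proof.
have Ha := size_A_gt0; have Han := size_A.
have [i /andP[Hai Hin] Hmin] := argmin (leq_addl n a).
suff HWi : preceq W (pre i) by move=> k Hk; apply: (preceq_trans Hlt HWi (Hmin k _)).
rewrite preceqNprec //; apply/negP => HiW.
have Hi_lt_n : i < n.
  rewrite ltnNge; apply/negP => Hni.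
  have [Ein|Hni'] := eqVneq i n; first by move: HiW; rewrite Ein pre_size; apply/negP/prec_irr.
  move: HiW; have -> : i = n + (i - n) by lia.
  rewrite pre_addn; last lia.
  rewrite -[X in prec _ X]cats0 prec_cat2l // precNpreceq // => /negP; apply.
  by apply/prec_preceq/ascent_pre_pos; lia.
have HWA : prec A (W ++ A) by rewrite -{1}[A]cat0s prec_cat2r // W_pos.
have Hle k : k <= n + a -> preceq (pre k) (W ++ A).
  move=> Hk; have [Hkn|Hkn] := leqP k n.
    exact: (preceq_trans Hlt (pre_le_A Hkn) (prec_preceq HWA)).
  have -> : k = n + (k - n) by lia.
  by rewrite pre_addn ?preceq_cat2l ?pre_le_A //; lia.
have : preceq (winv (pre i) ++ pre (n + a)) A.
  apply: rise_le_A => [||l Hl|l Hl]; [lia | lia | apply: Hmin; lia |].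
  by rewrite pre_addn -?A_pre; [apply: Hle|]; lia.
rewrite preceqNprec // => /negP; apply.
rewrite pre_addn // -A_pre (prec_reducel lt _ (_ : reduce A = reduce (winv W ++ (W ++ A)))).
  exact: prec_winv_cat_ltl (preceq_refl _ _).
by rewrite catA -reduce_cat_reducel reduce_winv_catl.
Qed.

Lemma pre_lt_A k : k <= n -> k != a -> prec (pre k) A.
Proof.
move=> Hk Hka; have Han := size_A; rewrite A_pre.
by apply: (preceq_pre_prec HWW); rewrite -?A_pre ?pre_le_A //; lia.
Qed.

Lemma W_lt_pre k : a <= k <= n + a -> k != n -> prec W (pre k).
Proof.
move=> Hk Hkn; have Han := size_A; rewrite -[X in prec X _](pre_size W).
by apply: (preceq_pre_prec HWW); rewrite 1?eq_sym ?pre_size ?W_le_pre //; lia.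
Qed.

Lemma pre_pos k : 0 < k <= n -> prec [::] (pre k).
Proof.
move=> Hk; have [Hka|Hka] := leqP k a; first by apply: ascent_pre_pos; lia.
by apply: (prec_preceq_trans Hlt W_pos (W_le_pre _)); have := size_A; lia.
Qed.

Lemma descent_drop_A : a < n -> descent lt (drop a W).
Proof.
move=> Han; rewrite -{1}(pre_size W); apply: (descent_seg HWW Hlt) => [|k Hk|k Hk].
- by rewrite Han leq_addr.
- by rewrite -A_pre; apply: pre_lt_A; lia.
- by rewrite pre_size; apply: W_lt_pre; lia.
Qed.

End PrefixAscent.

Section Occurrence.
Variables (X : eqType) (lt : word X -> word X -> bool).
Hypothesis Hlt : is_biorder lt.
Variables (W A : word X) (s : nat).
Hypotheses (HWW : reduced (W ++ W)) (HA : max_ascent lt W A) (Hocc : occurs_at W A s).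
Local Notation n := (size W).
Local Notation a := (size A).
Local Notation V := (rot s W).
Local Notation u := (take s W).
Local Notation pre k := (take k (W ++ W)).
Local Notation preV k := (take k (V ++ V)).
Local Notation prec := (prec lt).
Local Notation preceq := (preceq lt).

Lemma occurs_size : s + a <= n.
Proof. by case: Hocc. Qed.

Lemma prefix_rot_occurs : prefix A V.
Proof.
case: Hocc => Hs HsA; rewrite prefixE /rot takel_cat ?HsA // size_drop.
by rewrite -(leq_add2l s) subnKC // (leq_trans (leq_addr _ _) Hs).
Qed.

Lemma reduced_rot_occurs : reduced (V ++ V).
Proof. by rewrite reduced_cat_self rot_cycle -reduced_cat_self. Qed.

Lemma max_ascent_rot_occurs : max_ascent lt V A.
Proof.
apply: max_ascent_in_RW HA; first exact: in_RW_rot.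
exact/cyc_subword_infix/prefixW/prefix_rot_occurs.
Qed.

Lemma cat_take_rot : W ++ u = u ++ V.
Proof. by rewrite /rot catA cat_take_drop. Qed.

Lemma pre_addn_rot k : s + k <= n + n -> pre (s + k) = u ++ preV k.
Proof.
move=> Hk; have Hs : s <= n by have := occurs_size; lia.
have -> : W ++ W = u ++ (V ++ drop s W) by rewrite catA -cat_take_rot -catA cat_take_drop.
rewrite takeD take_size_cat ?size_takel // drop_size_cat ?size_takel //.
congr (_ ++ _); rewrite {3}/rot catA [in RHS]takel_cat // size_cat size_rot size_drop; lia.
Qed.

Let HWV := reduced_rot_occurs.
Let HAV := max_ascent_rot_occurs.
Let HAPV := prefix_rot_occurs.

Lemma occurs_W_pos : prec [::] W.
Proof.
have := W_pos Hlt HWV HAV HAPV.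
by rewrite -(prec_cat2l Hlt u) cats0 -cat_take_rot -{1}[u]cat0s prec_cat2r.
Qed.

Lemma take_pre k : k <= n -> take k W = pre k.
Proof. by move=> Hk; rewrite takel_cat. Qed.

Lemma occurs_peak k : k <= n -> k != s + a -> prec (take k W) (take (s + a) W).
Proof.
move=> Hk Hksa; have Hsa := occurs_size.
rewrite !take_pre // pre_addn_rot -?(A_pre HAPV); last lia.
have [Hsk|Hks] := leqP s k.
  rewrite -(subnKC Hsk) pre_addn_rot ?prec_cat2l //; last lia.
  by apply: (pre_lt_A Hlt HWV HAV HAPV); rewrite ?size_rot; lia.
apply: (@prec_preceq_trans _ _ Hlt (W ++ pre k)).
  by rewrite -{1}[pre k]cat0s prec_cat2r // occurs_W_pos.
rewrite -pre_addn; last lia.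
have -> : n + k = s + (n + k - s) by lia.
rewrite pre_addn_rot ?preceq_cat2l //; last lia.
by apply: (pre_le_A Hlt HWV HAV HAPV); rewrite ?size_rot; lia.
Qed.

Lemma occurs_low k : k <= n -> k != s -> prec (take s W) (take k W).
Proof.
move=> Hk Hks; have Hsa := occurs_size.
rewrite !take_pre //; last lia.
have [Hsk|Hks'] := ltnP s k.
  rewrite -{1}(addn0 s); have -> : k = s + (k - s) by lia.
  rewrite !pre_addn_rot ?prec_cat2l ?take0 //; try lia.
  by apply: (pre_pos Hlt HWV HAV HAPV); rewrite ?size_rot; lia.
rewrite -(prec_cat2l Hlt W) -!pre_addn; try lia.
rewrite [n + s]addnC; have -> : n + k = s + (n + k - s) by lia.
rewrite !pre_addn_rot ?prec_cat2l //; try lia.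
have -> : take n (V ++ V) = V by rewrite -(size_rot s W) take_size_cat.
by apply: (W_lt_pre Hlt HWV HAV HAPV); rewrite ?size_rot; lia.
Qed.

End Occurrence.

Section PeakLow.
Variables (X : eqType) (lt : word X -> word X -> bool).
Hypothesis Hlt : is_biorder lt.
Variables (W : word X) (j : nat).

Lemma peak_take M : (forall k, k <= size W -> k != j -> prec lt (take k W) (take j W)) ->
  peak lt W M -> M = take j W.
Proof.
move=> Hmax [HMW HM]; have EM : take (size M) W = M by apply/eqP; rewrite -prefixE.
have [Ej|Hne] := eqVneq (size M) j; first by rewrite -EM Ej.
have := HM _ (prefix_take W j); rewrite -EM preceqNprec // => /negP[].
by apply: Hmax Hne; apply: size_prefix.
Qed.

Lemma low_take m : (forall k, k <= size W -> k != j -> prec lt (take j W) (take k W)) ->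
  low lt W m -> m = take j W.
Proof.
move=> Hmin [HmW Hm]; have Em : take (size m) W = m by apply/eqP; rewrite -prefixE.
have [Ej|Hne] := eqVneq (size m) j; first by rewrite -Em Ej.
have := Hm _ (prefix_take W j); rewrite -Em preceqNprec // => /negP[].
by apply: Hmin Hne; apply: size_prefix.
Qed.

End PeakLow.

Lemma occurs_at_infix (X : eqType) (W A : word X) : infix A W -> exists i, occurs_at W A i.
Proof.
case/infixP=> p [q ->]; exists (size p); split; first by rewrite !size_cat addnA leq_addr.
by rewrite drop_size_cat // take_size_cat.
Qed.

Lemma occurs_at_unique (X : eqType) (lt : word X -> word X -> bool) (W A : word X) i i' :
  is_biorder lt -> reduced (W ++ W) -> max_ascent lt W A ->
  occurs_at W A i -> occurs_at W A i' -> i = i'.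
Proof.
move=> Hlt HWW HA Hi Hi'; apply/eqP; rewrite -(eqn_add2r (size A)); apply/negP => /negP Hne.
have := occurs_peak Hlt HWW HA Hi' (occurs_size Hi) Hne.
rewrite precNpreceq // => /negP[]; apply: prec_preceq.
by apply: (occurs_peak Hlt HWW HA Hi (occurs_size Hi')); rewrite eq_sym.
Qed.

Theorem lemma2p3 (X : eqType) (lt : word X -> word X -> bool)
  (Hlt : is_biorder lt) (W A M m : word X)
  (HW : cyc_reduced W)
  (HA : max_ascent lt W A) (HM : peak lt W M) (Hm : low lt W m)
  (HAW : infix A W) :
  [/\ prec lt [::] W,
      reduce M = reduce (m ++ A),
      (exists! i, occurs_at W A i),
      ~~ infix A (winv W) &
      forall D, W = A ++ D -> D != [::] -> descent lt D].
Proof.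
have HWW : reduced (W ++ W) by rewrite reduced_cat_self cyc_reduced_cycle.
have [s Hs] := occurs_at_infix HAW.
have HW1 := occurs_W_pos Hlt HWW HA Hs.
split=> //.
- rewrite (peak_take Hlt (occurs_peak Hlt HWW HA Hs) HM).
  by rewrite (low_take Hlt (occurs_low Hlt HWW HA Hs) Hm) takeD; case: Hs => _ ->.
- by exists s; split=> // i; apply: occurs_at_unique Hlt HWW HA Hs.
- apply/negP => HAWi; have [s' Hs'] := occurs_at_infix HAWi.
  have HWWi : reduced (winv W ++ winv W) by rewrite -winv_cat reduced_winv.
  have HAi := max_ascent_in_RW (in_RW_winv W) (cyc_subword_infix HAWi) HA.
  have := occurs_W_pos Hlt HWWi HAi Hs'.
  by rewrite prec0_winv // precNpreceq // prec_preceq.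
- move=> D EW HD; have -> : D = drop (size A) W by rewrite EW drop_size_cat.
  apply: (descent_drop_A Hlt HWW HA); first by rewrite EW prefix_prefix.
  by rewrite EW size_cat -addn1 leq_add2l lt0n size_eq0.
Qed.
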